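(* Let $T:\mathcal{M}_k\to\mathcal{M}_k$ be a completely positive map that is self-adjoint with respect to the trace inner product. Then $T$ is completely reducible if and only if for every orthogonal projection $W\in\mathcal{M}_k$ with $T(W\mathcal{M}_kW)\subseteq W\mathcal{M}_kW$ we have $T|_{W\mathcal{M}_kW^\perp+W^\perp\mathcal{M}_kW}\equiv0$.
   Context: $\mathcal{M}_k$ denotes the complex $k\times k$ matrices. For an orthogonal projection $W$, $W^\perp=\mathrm{Id}-W$; for orthogonal projections $V,W$, $V\mathcal{M}_kW=\{VXW:X\in\mathcal{M}_k\}$. A linear map $T:\mathcal{M}_k\to\mathcal{M}_k$ is completely positive if $T(X)=\sum_iR_iXR_i^*$ for some $R_i\in\mathcal{M}_k$; it is positive if it maps positive semidefinite matrices to positive semidefinite matrices, and self-adjoint if self-adjoint with respect to $\langle X,Y\rangle=\mathrm{tr}(XY^* )$. Given an orthogonal projection $V$ and a positive map $T:V\mathcal{M}_kV\to V\mathcal{M}_kV$, $T$ is irreducible if the only orthogonal projections $W$ with $W\mathcal{M}_kW\subseteq V\mathcal{M}_kV$ and $T(W\mathcal{M}_kW)\subseteq W\mathcal{M}_kW$ are $W=0$ and $W=V$. A self-adjoint positive map $T:\mathcal{M}_k\to\mathcal{M}_k$ is completely reducible if there are orthogonal projections $W_1,\dots,W_l$ with $W_iW_j=0$ for $i\ne j$, $T(W_i\mathcal{M}_kW_i)\subseteq W_i\mathcal{M}_kW_i$ and $T|_{W_i\mathcal{M}_kW_i}$ irreducible for every $i$, and $T|_R\equiv0$, where $R$ is the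 orthogonal complement (trace inner product) of $\bigoplus_iW_i\mathcal{M}_kW_i$ in $\mathcal{M}_k$. *)

From HB Require Import structures.
From mathcomp Require Import all_boot all_order all_algebra.
From mathcomp Require Import complex reals.
Set Implicit Arguments. Unset Strict Implicit. Unset Printing Implicit Defensive.
Import Order.TTheory GRing.Theory Num.Theory.
Local Open Scope ring_scope.

Section Defs.
Variable R : realType.
Local Notation C := (R[i]).
Variable k : nat.
Local Notation M := ('M[C]_k).

Definition adjmx (A : M) : M := (map_mx Num.conj A)^T.

Definition is_orth_proj (W : M) : Prop := W *m W = W /\ adjmx W = W.

Definition perp (W : M) : M := 1%:M - W.

Definition completely_positive (T : M -> M) : Prop :=
  exists (n : nat) (Rs : 'I_n -> M),
    forall X : M, T X = \sum_(i < n) Rs i *m X *m adjmx (Rs i).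

Definition trace_selfadjoint (T : M -> M) : Prop :=
  forall X Y : M, \tr (T X *m adjmx Y) = \tr (X *m adjmx (T Y)).

Definition maps_into (T : M -> M) (V W V' W' : M) : Prop :=
  forall X : M, exists Y : M, T (V *m X *m W) = V' *m Y *m W'.

Definition corner_sub (V W V' W' : M) : Prop :=
  forall X : M, exists Y : M, V *m X *m W = V' *m Y *m W'.

Definition irreducible_on (T : M -> M) (V : M) : Prop :=
  forall W : M, is_orth_proj W -> corner_sub W W V V ->
    maps_into T W W W W -> W = 0 \/ W = V.

Definition completely_reducible (T : M -> M) : Prop :=
  exists (l : nat) (Ws : 'I_l -> M),
    [/\ (forall i, is_orth_proj (Ws i)),
        (forall i j, i != j -> Ws i *m Ws j = 0),
        (forall i, maps_into T (Ws i) (Ws i) (Ws i) (Ws i)),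
        (forall i, irreducible_on T (Ws i)) &
        (* T vanishes on the trace-orthogonal complement of (+)_i W_i M_k W_i *)
        (forall X : M,
           (forall i (Y : M), \tr (X *m adjmx (Ws i *m Y *m Ws i)) = 0) ->
           T X = 0)].
End Defs.

(* Write T X = \sum_i R_i X R_i^*.  If P is an orthogonal projection with
   T(P M P) <= P M P, then (1 - P) T(P) (1 - P) = 0 is a sum of the positive
   matrices ((1 - P) R_i P)((1 - P) R_i P)^*, and P T(1 - P) P = 0 follows in
   the same way after moving T across the trace pairing; hence every R_i
   commutes with P, and T(P X (1 - P)) = P T(X) (1 - P).

   If T is completely reducible along W_1, ..., W_l, then T X is the sum of
   the T(W_i X W_i).  For a reducing P the hermitian matrix W_i P W_i commutes
   with the R_i, so irreducibility of W_i (through the range projection of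
   W_i P W_i - lambda W_i, for an eigenvalue lambda) makes it a scalar
   lambda W_i.  Since T kills (1 - W_i) M W_i, the identity
   F^* F = lambda (1 - lambda) W_i for F = (1 - W_i) P W_i gives
   lambda (1 - lambda) T(W_i X W_i) = 0, whence P T(W_i X W_i) (1 - P) = 0.

   Conversely, an induction on the rank splits the identity into mutually
   orthogonal irreducible reducing projections W_i; the blocks W_i X W_j with
   i <> j lie in W_i M W_i^perp, so T vanishes on the trace-orthogonal
   complement of the diagonal blocks. *)

From HB Require Import structures.
From mathcomp Require Import all_boot all_order all_algebra.
From mathcomp Require Import complex reals.
From Stdlib Require Import Classical FunctionalExtensionality.
Import GRing.Theory Num.Theory.
Set Implicit Arguments. Unset Strict Implicit. Unset Printing Implicit Defensive.
Local Open Scope ring_scope.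

Lemma mxrank_idem_lt (F : fieldType) k (W V : 'M[F]_k) : W *m W = W ->
  W *m V = W -> V *m W = W -> W != V -> (\rank W < \rank V)%N.
Proof.
move=> WW WV VW WnV; have WsubV : (W <= V)%MS by rewrite -WV submxMl.
rewrite ltn_neqAle mxrankS // andbT; apply: contraNneq WnV => /eqP.
rewrite (mxrank_leqif_eq WsubV).2 => /andP [_ /submxP [X VX]].
by rewrite -VW VX -mulmxA WW.
Qed.

Section Adjoint.
Variables (R : realType) (k : nat).
Local Notation M := ('M[R[i]]_k).
Implicit Types (A B P X Y W : M).
Local Notation adj := (@adjmx R k).

Lemma adjmxE A : adj A = (A ^t* )%sesqui.
Proof. by rewrite /adjmx map_trmx. Qed.

Lemma adjmxK A : adj (adj A) = A.
Proof. by apply/matrixP => i j; rewrite !mxE conjCK. Qed.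

Lemma adjmx_inj : injective adj.
Proof. exact: can_inj adjmxK. Qed.

Lemma adjmxM A B : adj (A *m B) = adj B *m adj A.
Proof. by rewrite /adjmx map_mxM trmx_mul. Qed.

Lemma adjmxD A B : adj (A + B) = adj A + adj B.
Proof. by rewrite /adjmx map_mxD linearD. Qed.

Lemma adjmxN A : adj (- A) = - adj A.
Proof. by rewrite /adjmx map_mxN linearN. Qed.

Lemma adjmxB A B : adj (A - B) = adj A - adj B.
Proof. by rewrite adjmxD adjmxN. Qed.

Lemma adjmx0 : adj 0 = 0.
Proof. by rewrite /adjmx map_mx0 trmx0. Qed.

Lemma adjmx1 : adj 1%:M = 1%:M.
Proof. by rewrite /adjmx map_mx1 trmx1. Qed.

Lemma adjmxZ (a : R[i]) A : adj (a *: A) = a^* *: adj A.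
Proof. by apply/matrixP => i j; rewrite !mxE rmorphM. Qed.

Lemma adjmx_sum (I : finType) (F : I -> M) : adj (\sum_i F i) = \sum_i adj (F i).
Proof.
apply/matrixP => i j; rewrite !mxE !summxE rmorph_sum.
by apply: eq_bigr => l _; rewrite !mxE.
Qed.

Lemma mxtrace_mul_adjmx B : \tr (B *m adj B) = \sum_i \sum_j `|B i j| ^+ 2.
Proof.
apply: eq_bigr => i _; rewrite mxE; apply: eq_bigr => j _.
by rewrite !mxE normCK.
Qed.

Lemma mxtrace_mul_adjmx_eq0 B : \tr (B *m adj B) = 0 -> B = 0.
Proof.
have sq_ge0 (x : R[i]) : 0 <= `|x| ^+ 2 by rewrite exprn_ge0.
rewrite mxtrace_mul_adjmx => /psumr_eq0P Brow; apply/matrixP => i j.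
have /psumr_eq0P Bi := Brow (fun i _ => sumr_ge0 _ (fun j _ => sq_ge0 _)) i isT.
by apply/eqP; rewrite mxE -normr_eq0 -sqrf_eq0 (Bi (fun j _ => sq_ge0 _)).
Qed.

Lemma mxtrace_mul_adjmx_ge0 B : 0 <= \tr (B *m adj B).
Proof.
by rewrite mxtrace_mul_adjmx sumr_ge0 // => i _; rewrite sumr_ge0 // => j _; rewrite exprn_ge0.
Qed.

Lemma mulmx_perp P : P *m P = P -> P *m perp P = 0.
Proof. by move=> PP; rewrite mulmxBr mulmx1 PP subrr. Qed.

Lemma mul_perp_mx P : P *m P = P -> perp P *m P = 0.
Proof. by move=> PP; rewrite mulmxBl mul1mx PP subrr. Qed.

Lemma orth_proj_perp P : is_orth_proj P -> is_orth_proj (perp P).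
Proof.
case=> PP Pa; split; last by rewrite adjmxB adjmx1 Pa.
by rewrite {1}/perp mulmxBl mul1mx mulmx_perp // subr0.
Qed.

Lemma mxtrace_corner W X Y : adj W = W ->
  \tr (X *m adj (W *m Y *m W)) = \tr ((W *m X *m W) *m adj Y).
Proof.
by move=> Wa; rewrite !adjmxM Wa !mulmxA mxtrace_mulC !mulmxA.
Qed.

Lemma adj_offcorner_mul W P : is_orth_proj W -> is_orth_proj P ->
  adj (perp W *m P *m W) *m (perp W *m P *m W) =
  W *m P *m W - (W *m P *m W) *m (W *m P *m W).
Proof.
move=> Wproj [PP Pa]; have [WW Wa] := Wproj; have [QQ Qa] := orth_proj_perp Wproj.
rewrite !adjmxM Pa Wa Qa !mulmxA -(mulmxA _ (perp W) (perp W)) QQ.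
by rewrite -(mulmxA _ W W) WW /perp mulmxBr mulmx1 !mulmxBl -(mulmxA W P P) PP.
Qed.

Lemma comm_mx_stable_adj S P : adj P = P ->
  S *m P = P *m S *m P -> adj S *m P = P *m adj S *m P -> comm_mx S P.
Proof.
move=> Pa SP /(congr1 adj); rewrite !adjmxM adjmxK Pa mulmxA => PS.
by rewrite /comm_mx SP -PS.
Qed.

Lemma comm_mx_adj S N : comm_mx S (adj N) -> comm_mx (adj S) N.
Proof. by move=> /(congr1 adj); rewrite !adjmxM adjmxK. Qed.

End Adjoint.

Section Kraus.
Variables (R : realType) (k n : nat) (Rs : 'I_n -> 'M[R[i]]_k).
Local Notation M := ('M[R[i]]_k).
Implicit Types (F P X : M).
Local Notation adj := (@adjmx R k).

Definition kraus X : M := \sum_i Rs i *m X *m adj (Rs i).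

Lemma kraus_is_linear : linear kraus.
Proof.
move=> a X Y; rewrite /kraus scaler_sumr -big_split; apply: eq_bigr => i _ /=.
by rewrite mulmxDr mulmxDl -scalemxAr -scalemxAl.
Qed.

HB.instance Definition _ := GRing.isLinear.Build _ _ _ _ kraus kraus_is_linear.

Lemma kraus_adjmx X : adj (kraus X) = kraus (adj X).
Proof.
by rewrite adjmx_sum; apply: eq_bigr => i _; rewrite !adjmxM adjmxK mulmxA.
Qed.

Definition kraus_comm F := forall i, comm_mx (Rs i) F.

Lemma kraus_mulmxl F : kraus_comm F -> forall X, kraus (F *m X) = F *m kraus X.
Proof.
by move=> cF X; rewrite mulmx_sumr; apply: eq_bigr => i _; rewrite !mulmxA cF.
Qed.

Lemma kraus_mulmxr F : kraus_comm (adj F) -> forall X, kraus (X *m F) = kraus X *m F.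
Proof.
move=> cFa X; rewrite mulmx_suml; apply: eq_bigr => i _.
have := congr1 adj (cFa i); rewrite !adjmxM adjmxK => FR.
by rewrite -!mulmxA FR.
Qed.

Lemma kraus_comm_invariant P : is_orth_proj P -> kraus_comm P ->
  maps_into kraus P P P P.
Proof.
case=> _ Pa cP X; have cPadj : kraus_comm (adj P) by rewrite Pa.
by exists (kraus X); rewrite (kraus_mulmxr cPadj) (kraus_mulmxl cP).
Qed.

Lemma mxtrace_kraus_sandwich_eq0 F X :
  \tr (F *m kraus (X *m adj X) *m adj F) = 0 -> forall i, F *m Rs i *m X = 0.
Proof.
have -> : \tr (F *m kraus (X *m adj X) *m adj F) =
          \sum_i \tr ((F *m Rs i *m X) *m adj (F *m Rs i *m X)).
  rewrite mulmx_sumr mulmx_suml raddf_sum; apply: eq_bigr => i _.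
  by rewrite !adjmxM !mulmxA.
move=> /psumr_eq0P tr0 i; apply: mxtrace_mul_adjmx_eq0.
exact: tr0 (fun i _ => mxtrace_mul_adjmx_ge0 _) i isT.
Qed.

Hypothesis kraus_sa : trace_selfadjoint kraus.

Lemma kraus_invariant_comm P : is_orth_proj P -> maps_into kraus P P P P ->
  kraus_comm P.
Proof.
move=> Pproj PinvP; have [PP Pa] := Pproj; have [QQ Qa] := orth_proj_perp Pproj.
have [Y TP] := PinvP 1%:M; rewrite mulmx1 PP in TP.
have QP0 X : perp P *m (P *m X) = 0 by rewrite mulmxA mul_perp_mx // mul0mx.
have QRP i : perp P *m Rs i *m P = 0.
  apply: mxtrace_kraus_sandwich_eq0; rewrite Pa PP TP -!mulmxA QP0.
  exact: mxtrace0.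
have PRQ i : P *m Rs i *m perp P = 0.
  apply: mxtrace_kraus_sandwich_eq0; rewrite Qa QQ Pa -mulmxA mxtrace_mulC -mulmxA PP.
  by rewrite -[X in \tr (_ *m X)]Pa kraus_sa kraus_adjmx Pa TP -!mulmxA QP0 mxtrace0.
have stable S : perp P *m S *m P = 0 -> S *m P = P *m S *m P.
  by rewrite /perp mulmxBl mul1mx mulmxBl => /eqP; rewrite subr_eq0 => /eqP.
move=> i; apply: (comm_mx_stable_adj Pa (stable _ (QRP i)) (stable _ _)).
by have := congr1 adj (PRQ i); rewrite !adjmxM Qa Pa adjmx0 mulmxA.
Qed.

End Kraus.

Section Spectral.
Variables (R : realType) (k : nat).
Local Notation M := ('M[R[i]]_k).
Implicit Types (A B E G N S U W Z : M).
Local Notation adj := (@adjmx R k).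

Lemma adjmx_diag (d : 'rV[R[i]]_k) : adj (diag_mx d) = diag_mx (map_mx Num.conj d).
Proof.
apply/matrixP => i j; rewrite !mxE eq_sym.
by case: eqVneq => [->|_]; rewrite ?mulr1n ?mulr0n ?rmorph0.
Qed.

Lemma range_proj_stable S N E G : comm_mx S N -> E = N *m G -> E *m N = N ->
  S *m E = E *m S *m E.
Proof.
move=> SN EG EN; rewrite {1}EG mulmxA SN -{1}EN -(mulmxA E N) -SN.
by rewrite mulmxA -(mulmxA _ N G) -EG.
Qed.

Lemma normalmx_spectral N : N *m adj N = adj N *m N ->
  exists U d, U \is unitarymx /\ N = invmx U *m diag_mx d *m U.
Proof.
move=> Nnormal; exists (spectralmx N), (spectral_diag N).
split; first exact: spectral_unitarymx.
by apply/orthomx_spectralP/normalmxP; rewrite !adjmxE in Nnormal.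
Qed.

Lemma normalmx_diag_conj N : N *m adj N = adj N *m N ->
  exists (cj : M -> M) (d : 'rV[R[i]]_k),
    [/\ {morph cj : A B / A *m B}, {morph cj : A / adj A} & N = cj (diag_mx d)].
Proof.
move=> /normalmx_spectral[U [d [Uunitary NU]]].
have Uunit : U \in unitmx := unitarymx_unit Uunitary.
have adjU : adj U = invmx U by rewrite (invmx_unitary Uunitary) adjmxE.
exists (fun A => invmx U *m A *m U), d; split; last exact: NU.
  by move=> A B; cbv beta; rewrite -!mulmxA (mulmxA U) (mulmxV Uunit) mul1mx.
by move=> A; cbv beta; rewrite !adjmxM adjU -{3}adjU adjmxK -mulmxA.
Qed.

Lemma normalmx_range_proj N : N *m adj N = adj N *m N ->
  exists E G, [/\ is_orth_proj E, E = N *m G, E = G *m N & N *m E = N].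
Proof.
move=> /normalmx_diag_conj[cj [d [cjM cj_adj ->]]].
pose dinv := \row_j (d 0 j)^-1; pose e := \row_j (d 0 j * dinv 0 j).
have e01 j : e 0 j = 0 \/ e 0 j = 1.
  rewrite !mxE; have [->|dj0] := eqVneq (d 0 j) 0; first by left; rewrite mul0r.
  by right; rewrite mulfV.
have ee : \row_j (e 0 j * e 0 j) = e.
  by apply/rowP => j; rewrite mxE; case: (e01 j) => ->; rewrite ?mulr0 ?mulr1.
have e_real : map_mx Num.conj e = e.
  by apply/rowP => j; rewrite mxE; case: (e01 j) => ->; rewrite ?rmorph0 ?rmorph1.
have de : \row_j (d 0 j * e 0 j) = d.
  apply/rowP => j; rewrite !mxE; have [->|dj0] := eqVneq (d 0 j) 0; first by rewrite mul0r.
  by rewrite mulfV // mulr1.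
have dinvd : \row_j (dinv 0 j * d 0 j) = e by apply/rowP => j; rewrite !mxE mulrC.
exists (cj (diag_mx e)), (cj (diag_mx dinv)).
rewrite -!cjM !mulmx_diag de dinvd; split; [split | by [] | by [] | by []].
  by rewrite -cjM mulmx_diag ee.
by rewrite -cj_adj adjmx_diag e_real.
Qed.

Lemma hermitian_eigenvector_in_proj Z W : adj Z = Z -> W *m W = W ->
  W *m Z = Z -> Z *m W = Z -> W != 0 ->
  exists (l : R[i]) (v : 'rV_k), [/\ v != 0, v *m W = v & v *m Z = l *: v].
Proof.
move=> Zherm WW WZ ZW W0.
have Znormal : Z *m adj Z = adj Z *m Z by rewrite Zherm.
have [U [d [Uunitary ZU]]] := normalmx_spectral Znormal.
have Uunit : U \in unitmx := unitarymx_unit Uunitary.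
have UZ : U *m Z = diag_mx d *m U by rewrite ZU !mulmxA (mulmxV Uunit) mul1mx.
have [j uW0] : exists j, row j U *m W != 0.
  apply/existsP; rewrite -negb_forall; apply: contra W0 => /forallP uW0.
  have UW0 : U *m W = 0.
    by apply/row_matrixP => j; rewrite row_mul row0; exact/eqP/uW0.
  by rewrite -[W]mul1mx -(mulVmx Uunit) -mulmxA UW0 mulmx0.
have uZ : row j U *m Z = d 0 j *: row j U.
  by rewrite -row_mul UZ row_mul row_diag_mx -scalemxAl -rowE.
exists (d 0 j), (row j U *m W); split; [exact: uW0 | by rewrite -mulmxA WW |].
by rewrite -mulmxA WZ uZ scalemxAl -uZ -mulmxA ZW.
Qed.

End Spectral.

Section Irreducible.
Variables (R : realType) (k n : nat) (Rs : 'I_n -> 'M[R[i]]_k).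
Local Notation M := ('M[R[i]]_k).
Implicit Types (E G N W Z : M).
Local Notation adj := (@adjmx R k).
Local Notation T := (kraus Rs).

Lemma irreducible_comm_scalar W Z : is_orth_proj W -> kraus_comm Rs W ->
  irreducible_on T W -> kraus_comm Rs Z -> adj Z = Z -> W *m Z = Z -> Z *m W = Z ->
  exists l, Z = l *: W.
Proof.
move=> Wproj cW Wirr cZ Zherm WZ ZW; have [WW Wa] := Wproj.
have [W0|W0] := eqVneq W 0; first by exists 0; rewrite scale0r -ZW W0 mulmx0.
have [l [v [v0 vW vZ]]] := hermitian_eigenvector_in_proj Zherm WW WZ ZW W0.
pose N := Z - l *: W.
have Nadj : adj N = Z - l^* *: W by rewrite adjmxB adjmxZ Zherm Wa.
have NW : N *m W = N by rewrite /N mulmxBl -scalemxAl WW ZW.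
have WN : W *m N = N by rewrite /N mulmxBr -scalemxAr WW WZ.
have Nnormal : N *m adj N = adj N *m N.
  have swap (a b c d : M) : a - b - (c - d) = a - c - (b - d).
    by rewrite !opprD !opprK addrACA.
  rewrite Nadj /N !mulmxBl !mulmxBr -!scalemxAl -!scalemxAr WZ ZW WW !scalerA mulrC.
  exact: swap.
have [E [G [Eproj EG GE NE]]] := normalmx_range_proj Nnormal.
have [_ Ea] := Eproj.
have EN : E *m N = N by rewrite {1}EG -mulmxA -GE.
have cN i : comm_mx (Rs i) N.
  by rewrite /comm_mx /N mulmxBr mulmxBl -scalemxAr -scalemxAl (cZ i) (cW i).
have cNadj i : comm_mx (Rs i) (adj N).
  by rewrite Nadj /comm_mx mulmxBr mulmxBl -scalemxAr -scalemxAl (cZ i) (cW i).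
have cE i : comm_mx (Rs i) E.
  apply: (comm_mx_stable_adj Ea (range_proj_stable (cN i) EG EN)).
  exact: range_proj_stable (comm_mx_adj (cNadj i)) EG EN.
have EW : E *m W = E by rewrite {1 2}GE -mulmxA NW.
have WE : W *m E = E by rewrite {1 2}EG mulmxA WN.
have Esub : corner_sub E E W W.
  by move=> X; exists (E *m X *m E); rewrite !mulmxA WE -!mulmxA EW.
case: (Wirr E Eproj Esub (kraus_comm_invariant Eproj cE)) => [E0 | EW'].
  by exists l; apply/eqP; rewrite -subr_eq0 -/N -NE E0 mulmx0.
have vN : v *m N = 0 by rewrite /N mulmxBr vZ -scalemxAr vW subrr.
by case/eqP: v0; rewrite -vW -EW' EG mulmxA vN mul0mx.
Qed.

End Irreducible.

Section CompletelyReducible.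
Variables (R : realType) (k n : nat) (Rs : 'I_n -> 'M[R[i]]_k).
Local Notation M := ('M[R[i]]_k).
Implicit Types (A B P X Y : M).
Local Notation adj := (@adjmx R k).
Local Notation T := (kraus Rs).
Hypothesis kraus_sa : trace_selfadjoint T.
Variables (l : nat) (Ws : 'I_l -> M).
Hypotheses (Ws_proj : forall i, is_orth_proj (Ws i))
  (Ws_orth : forall i j, i != j -> Ws i *m Ws j = 0)
  (Ws_inv : forall i, maps_into T (Ws i) (Ws i) (Ws i) (Ws i))
  (Ws_irr : forall i, irreducible_on T (Ws i))
  (T_compl : forall X : M,
     (forall i (Y : M), \tr (X *m adj (Ws i *m Y *m Ws i)) = 0) -> T X = 0).

Lemma kraus_eq0_of_diag_blocks X : (forall j, Ws j *m X *m Ws j = 0) -> T X = 0.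
Proof.
move=> X0; apply: T_compl => i Y.
by rewrite mxtrace_corner; [rewrite X0 mul0mx mxtrace0 | case: (Ws_proj i)].
Qed.

Lemma kraus_offdiag_eq0 i X : T (perp (Ws i) *m X *m Ws i) = 0.
Proof.
apply: kraus_eq0_of_diag_blocks => j; have [<-|ij] := eqVneq i j.
  by have [WW _] := Ws_proj i; rewrite !mulmxA (mulmx_perp WW) !mul0mx.
by rewrite -!mulmxA (Ws_orth ij) !mulmx0.
Qed.

Lemma kraus_diag_blocks X : T X = \sum_i T (Ws i *m X *m Ws i).
Proof.
apply/eqP; rewrite -subr_eq0 -raddf_sum -raddfB; apply/eqP.
apply: kraus_eq0_of_diag_blocks => j.
rewrite mulmxBr mulmxBl mulmx_sumr mulmx_suml (bigD1 j) //= big1 => [|i ij].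
  by have [WW _] := Ws_proj j; rewrite addr0 !mulmxA WW -!mulmxA WW subrr.
by rewrite eq_sym in ij; rewrite !mulmxA (Ws_orth ij) !mul0mx.
Qed.

Lemma Ws_comm i : kraus_comm Rs (Ws i).
Proof. exact: (kraus_invariant_comm kraus_sa (Ws_proj i) (Ws_inv i)). Qed.

Lemma proj_mul_diag_block_perp P i A : is_orth_proj P -> kraus_comm Rs P ->
  P *m T (Ws i *m A *m Ws i) *m perp P = 0.
Proof.
move=> Pproj cP; have [_ Pa] := Pproj; set W := Ws i.
have Wproj : is_orth_proj W := @Ws_proj i; have [WW Wa] := Wproj; have cW := Ws_comm i.
set Z := W *m P *m W; set F := perp W *m P *m W.
have Zherm : adj Z = Z by rewrite !adjmxM Wa Pa mulmxA.
have cZ : kraus_comm Rs Z := fun j => comm_mxM (comm_mxM (cW j) (cP j)) (cW j).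
have cF : kraus_comm Rs F :=
  fun j => comm_mxM (comm_mxM (comm_mxB (comm_mx1 _) (cW j)) (cP j)) (cW j).
have WZ : W *m Z = Z by rewrite !mulmxA WW.
have ZW : Z *m W = Z by rewrite -mulmxA WW.
have [lam Zlam] := irreducible_comm_scalar Wproj cW (@Ws_irr i) cZ Zherm WZ ZW.
pose Y A' := T (W *m A' *m W).
have WY A' : W *m Y A' = Y A' by rewrite -(kraus_mulmxl cW) !mulmxA WW.
have cWadj : kraus_comm Rs (adj W) by rewrite Wa.
have YW A' : Y A' *m W = Y A' by rewrite -(kraus_mulmxr cWadj) -mulmxA WW.
have FY A' : F *m Y A' = 0.
  rewrite -(kraus_mulmxl cF).
  have -> : F *m (W *m A' *m W) = perp W *m (P *m W *m A') *m W.
    by rewrite /F !mulmxA -(mulmxA _ W W) WW.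
  exact: kraus_offdiag_eq0.
have PW : P *m W = Z + F.
  have WQ : W + perp W = 1%:M by rewrite /perp addrC subrK.
  by rewrite /Z /F -!mulmxDl WQ mul1mx.
have PY A' : P *m Y A' = Z *m Y A' by rewrite -WY mulmxA PW mulmxDl FY addr0 WY.
have YP A' : Y A' *m P = Y A' *m Z.
  apply: adjmx_inj; rewrite !(adjmxM (Y A')) Pa Zherm /Y kraus_adjmx !adjmxM Wa mulmxA.
  exact: PY.
have FF : adj F *m F = Z - Z *m Z := adj_offcorner_mul Wproj Pproj.
have lamY : (lam - lam * lam) *: Y A = 0.
  have := congr1 (mulmx^~ (Y A)) FF; rewrite -mulmxA FY mulmx0 Zlam.
  by rewrite -scalemxAl -scalemxAr WW scalerA -scalerBl -scalemxAl WY => /esym.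
rewrite -/(Y A) /perp mulmxBr mulmx1 -mulmxA YP mulmxA PY Zlam -!scalemxAl -scalemxAr.
by rewrite WY YW scalerA -scalerBl.
Qed.

Lemma invariant_proj_offdiag_eq0 P A B : is_orth_proj P -> maps_into T P P P P ->
  T (P *m A *m perp P + perp P *m B *m P) = 0.
Proof.
move=> Pproj PinvP; have [_ Pa] := Pproj; have [_ Qa] := orth_proj_perp Pproj.
have cP := kraus_invariant_comm kraus_sa Pproj PinvP.
have cQadj : kraus_comm Rs (adj (perp P)).
  by rewrite Qa => j; exact: comm_mxB (comm_mx1 _) (cP j).
have TPQ X : T (P *m X *m perp P) = 0.
  rewrite (kraus_mulmxr cQadj) (kraus_mulmxl cP) (kraus_diag_blocks X).
  rewrite mulmx_sumr mulmx_suml big1 // => i _.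
  exact: proj_mul_diag_block_perp.
rewrite raddfD /= TPQ add0r; apply: adjmx_inj.
by rewrite kraus_adjmx adjmx0 !adjmxM Pa Qa mulmxA TPQ.
Qed.

End CompletelyReducible.

Section Decomposition.
Variables (R : realType) (k n : nat) (Rs : 'I_n -> 'M[R[i]]_k).
Local Notation M := ('M[R[i]]_k).
Implicit Types (V W : M).
Local Notation T := (kraus Rs).
Hypothesis kraus_sa : trace_selfadjoint T.

Lemma irreducible_subproj V : is_orth_proj V -> kraus_comm Rs V -> V != 0 ->
  exists W, [/\ is_orth_proj W /\ kraus_comm Rs W, W != 0, irreducible_on T W,
                W *m V = W & V *m W = W].
Proof.
have [m] := ubnP (\rank V); elim: m V => // m IHm V rkV Vproj cV V0.
have [Virr | Vred] := classic (irreducible_on T V).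
  by have [VV _] := Vproj; exists V.
have [W [Wproj WsubV Winv [W0 WV]]] : exists W, [/\ is_orth_proj W, corner_sub W W V V,
    maps_into T W W W W & W <> 0 /\ W <> V].
  apply: NNPP => noW; apply: Vred => W Wproj WsubV Winv.
  by apply: NNPP => /not_or_and Wnontriv; apply: noW; exists W.
have [WW _] := Wproj; have [VV _] := Vproj.
have [Y WY] := WsubV 1%:M; rewrite mulmx1 WW in WY.
have WVW : W *m V = W by rewrite WY -mulmxA VV.
have VWW : V *m W = W by rewrite WY !mulmxA VV.
have rkW : (\rank W < m)%N.
  by rewrite -ltnS (leq_trans _ rkV) // ltnS mxrank_idem_lt //; apply/eqP.
have W0' : W != 0 by apply/eqP.
have [U [Uproj U0 Uirr UW WU]] := IHm W rkW Wproj (kraus_invariant_comm kraus_sa Wproj Winv) W0'.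
exists U; split; [exact: Uproj | exact: U0 | exact: Uirr | |].
  by rewrite -UW -mulmxA WVW.
by rewrite -WU mulmxA VWW.
Qed.

Lemma irreducible_decomposition V : is_orth_proj V -> kraus_comm Rs V ->
  exists s : seq M,
  [/\ forall i, (i < size s)%N ->
        (is_orth_proj s`_i /\ kraus_comm Rs s`_i) /\ irreducible_on T s`_i,
      forall i j, (i < size s)%N -> (j < size s)%N -> i != j -> s`_i *m s`_j = 0,
      forall i, (i < size s)%N -> s`_i *m V = s`_i &
      \sum_(W <- s) W = V].
Proof.
have [m] := ubnP (\rank V); elim: m V => // m IHm V rkV Vproj cV.
have [V0|V0] := eqVneq V 0; first by exists [::]; split => //; rewrite big_nil V0.
have [VV Va] := Vproj.
have [W [[[WW Wa] cW] W0 Wirr WV VW]] := irreducible_subproj Vproj cV V0.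
pose V' := V - W.
have V'V : V' *m V = V' by rewrite mulmxBl VV WV.
have VV' : V *m V' = V' by rewrite mulmxBr VV VW.
have V'W : V' *m W = 0 by rewrite mulmxBl VW WW subrr.
have V'proj : is_orth_proj V'.
  by split; [rewrite {1}/V' mulmxBl VV' mulmxBr WV WW subrr subr0 | rewrite adjmxB Va Wa].
have rkV' : (\rank V' < m)%N.
  rewrite -ltnS (leq_trans _ rkV) // ltnS mxrank_idem_lt //; first by case: V'proj.
  by apply: contraNneq W0 => V'eqV; rewrite -[W](subKr V) -/V' V'eqV subrr.
have [s [s_irr s_orth s_sub s_sum]] := IHm V' rkV' V'proj (fun j => comm_mxB (cV j) (cW j)).
have sW i : (i < size s)%N -> s`_i *m W = 0.
  by move=> lt_i; rewrite -(s_sub i lt_i) -mulmxA V'W mulmx0.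
have Ws i : (i < size s)%N -> W *m s`_i = 0.
  move=> lt_i; have [[[_ sa] _] _] := s_irr i lt_i.
  by rewrite -Wa -sa -adjmxM sW // adjmx0.
exists (W :: s); split.
- by case=> [|i] /= lt_i; [split; [split; [split|]|] | apply: s_irr].
- case=> [|i] [|j] //= lt_i lt_j ij; [exact: Ws | exact: sW | exact: s_orth].
- by case=> [|i] //= lt_i; rewrite -(s_sub i lt_i) -mulmxA V'V.
- by rewrite big_cons s_sum /V' addrC subrK.
Qed.

Lemma completely_reducible_of_offdiag_eq0 :
  (forall W, is_orth_proj W -> maps_into T W W W W ->
     forall A B, T (W *m A *m perp W + perp W *m B *m W) = 0) ->
  completely_reducible T.
Proof.
move=> offdiag0.
have id_proj : is_orth_proj (1%:M : M) by split; rewrite ?mulmx1 ?adjmx1.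
have [s [s_irr s_orth _ s_sum]] := irreducible_decomposition id_proj (fun j => comm_mx1 _).
pose Ws (i : 'I_(size s)) := s`_i.
have Ws_irr (i : 'I_(size s)) := s_irr i (ltn_ord i).
have Ws_proj i : is_orth_proj (Ws i) := (Ws_irr i).1.1.
have Ws_comm i : kraus_comm Rs (Ws i) := (Ws_irr i).1.2.
have Ws_orth i j : i != j -> Ws i *m Ws j = 0 := s_orth i j (ltn_ord i) (ltn_ord j).
exists (size s), Ws; split=> [i | i j | i | i | X X0].
- exact: Ws_proj.
- exact: Ws_orth.
- exact: kraus_comm_invariant (Ws_proj i) (Ws_comm i).
- exact: (Ws_irr i).2.
have Xdiag i : Ws i *m X *m Ws i = 0.
  apply: mxtrace_mul_adjmx_eq0; rewrite -mxtrace_corner ?X0 //.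
  by case: (Ws_proj i).
have Xblocks : \sum_i \sum_j Ws i *m X *m Ws j = X.
  have sum1 : \sum_i Ws i = 1%:M by rewrite -s_sum (big_nth 0) big_mkord.
  under eq_bigr do rewrite -mulmx_sumr.
  by rewrite -!mulmx_suml sum1 mul1mx mulmx1.
rewrite -Xblocks raddf_sum big1 // => i _; rewrite raddf_sum big1 // => j _.
have [<-|ij] := eqVneq i j; first by rewrite Xdiag raddf0.
have Winv := kraus_comm_invariant (Ws_proj i) (Ws_comm i).
have := offdiag0 (Ws i) (Ws_proj i) Winv (X *m Ws j) 0.
rewrite mulmx0 mul0mx addr0 /perp mulmxBr mulmx1 -!mulmxA.
by rewrite eq_sym in ij; rewrite (Ws_orth _ _ ij) !mulmx0 subr0.
Qed.

End Decomposition.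

Theorem mainTheorem4 (R : realType) (k : nat) (T : 'M[R[i]]_k -> 'M[R[i]]_k) :
  completely_positive T -> trace_selfadjoint T ->
  (completely_reducible T <->
   (forall W : 'M[R[i]]_k, is_orth_proj W -> maps_into T W W W W ->
      forall A B : 'M[R[i]]_k,
        T (W *m A *m perp W + perp W *m B *m W) = 0)).
Proof.
move=> [n [Rs TE]]; have -> : T = kraus Rs by apply: functional_extensionality.
move=> T_sa; split; last exact: completely_reducible_of_offdiag_eq0.
move=> [l [Ws [Ws_proj Ws_orth Ws_inv Ws_irr Ws_compl]]] W Wproj Winv A B.
exact: (invariant_proj_offdiag_eq0 T_sa Ws_proj Ws_orth Ws_inv Ws_irr Ws_compl A B Wproj Winv).
Qed.
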